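(* For every formula $\varphi$ of propositional linear temporal logic, $\mathrm{LTL} \models \neg \Box (\varphi\leftrightarrow \bigcirc\Box\diamondsuit \neg\varphi)$.
   Context: Propositional linear temporal logic (LTL) with the ''next'' modality $\bigcirc$, ''always'' modality $\Box$ and $\diamondsuit\varphi\equiv\neg\Box\neg\varphi$, interpreted over infinite sequences of states $\mathcal{K}=(\eta_0,\eta_1,\dots)$ with $\mathcal{K}_i(\bigcirc\varphi)=\mathcal{K}_{i+1}(\varphi)$, $\mathcal{K}_i(\Box\varphi)=\mathfrak{tt}$ iff $\mathcal{K}_j(\varphi)=\mathfrak{tt}$ for all $j\ge i$. $\mathrm{LTL}\models\varphi$ means validity in all temporal structures. Here $\bigcirc$ denotes the LTL ''next'' operator. *)

Inductive formula : Type :=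
  | Var : nat -> formula
  | Fls : formula
  | Neg : formula -> formula
  | Imp : formula -> formula -> formula
  | Next : formula -> formula
  | Always : formula -> formula.

Definition Conj (a b : formula) : formula := Neg (Imp a (Neg b)).
Definition Iff (a b : formula) : formula := Conj (Imp a b) (Imp b a).
Definition Ev (a : formula) : formula := Neg (Always (Neg a)).

Definition state := nat -> bool.
Definition tstruct := nat -> state.

Fixpoint holds (K : tstruct) (i : nat) (f : formula) : Prop :=
  match f with
  | Var v => K i v = true
  | Fls => False
  | Neg a => ~ holds K i a
  | Imp a b => holds K i a -> holds K i b
  | Next a => holds K (S i) a
  | Always a => forall j, i <= j -> holds K j a
  end.

Definition valid (f : formula) : Prop := forall (K : tstruct) (i : nat), holds K i f.

(* At every position j, [○□◇¬φ] says that ¬φ holds infinitely often, a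
   property of the sequence that does not depend on j.  Under the hypothesis,
   φ at some j >= i would make ¬φ occur infinitely often, in particular at some
   later l, yet the same property forces φ at l.  So φ fails everywhere from i
   on, whence ¬φ holds infinitely often, and the equivalence yields φ at i. *)

From Stdlib Require Import Classical Lia.

Definition infinitely_often (P : nat -> Prop) : Prop :=
  forall k, exists l, k <= l /\ P l.

Lemma no_pred_iff_infinitely_often_not (P : nat -> Prop) (i : nat) :
  ~ (forall j, i <= j -> (P j <-> infinitely_often (fun l => ~ P l))).
Proof.
  intros H.
  assert (never : forall j, i <= j -> ~ P j).
  { intros j Hj Pj.
    pose proof (proj1 (H j Hj) Pj) as IO.
    destruct (IO i) as [l [Hl nPl]].
    exact (nPl (proj2 (H l Hl) IO)). }
  apply (never i (le_n i)), (H i (le_n i)).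
  intros k. exists (Nat.max k i). split; [lia | apply never; lia].
Qed.

Lemma holds_Iff (K : tstruct) (i : nat) (a b : formula) :
  holds K i (Iff a b) -> (holds K i a <-> holds K i b).
Proof.
  simpl. intros H.
  destruct (classic (holds K i a)), (classic (holds K i b)); tauto.
Qed.

Lemma holds_Ev (K : tstruct) (i : nat) (a : formula) :
  holds K i (Ev a) <-> exists j, i <= j /\ holds K j a.
Proof.
  simpl. split.
  - intros H. apply NNPP. intros Hnone. apply H. intros j Hj Ha.
    apply Hnone. now exists j.
  - intros [j [Hj Ha]] Hall. exact (Hall j Hj Ha).
Qed.

Lemma holds_Next_Always_Ev (K : tstruct) (i : nat) (a : formula) :
  holds K i (Next (Always (Ev a))) <->
  infinitely_often (fun l => holds K l a).
Proof.
  simpl. split.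
  - intros H k.
    destruct (proj1 (holds_Ev K _ a) (H (Nat.max k (S i)) ltac:(lia)))
      as [l [Hl Ha]].
    exists l. split; [lia | exact Ha].
  - intros H k _. apply holds_Ev, H.
Qed.

Theorem mainTheorem5 : forall phi : formula,
  valid (Neg (Always (Iff phi (Next (Always (Ev (Neg phi))))))).
Proof.
  intros phi K i H.
  change (forall j, i <= j ->
    holds K j (Iff phi (Next (Always (Ev (Neg phi)))))) in H.
  apply (no_pred_iff_infinitely_often_not (fun l => holds K l phi) i).
  intros j Hj.
  rewrite <- (holds_Next_Always_Ev K j (Neg phi)).
  exact (holds_Iff K j _ _ (H j Hj)).
Qed.
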